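(* If $T$ and $T'$ are standard tableaux such that $(T,T')$ is a pair of type $D_j(i)$ for some $i\ge1$ and $1\le j\le4$, then $\digamma(T)=q\,\digamma(T')$.
   Context: Tableaux (French convention: rows of lengths $\lambda_1\ge\lambda_2\ge\cdots$ from bottom to top). A tableau is identified with (shape, reading word), the reading word listing the entries row by row from top row to bottom row, each row left to right. Standard tableau of degree $n$: rows increase left to right, columns increase upwards, entries $1,\dots,n$ each once. Cocharge of a standard word $w$ of degree $n$: $c_1=0$, $c_{i+1}=c_i+1$ if $i+1$ is left of $i$ in $w$, else $c_{i+1}=c_i$; $\mathrm{cocharge}(w)=\sum c_i$; the cocharge of a standard tableau is that of its reading word. With $b=a+1$, $c=a+2$, $d=a+3$: $D_1(a)=(bacd,cabd)$, $D_2(a)=(dbac,dcab)$, $D_3(a)=(acdb,abdc)$, $D_4(a)=(cdba,bdca)$. A pair $(T_1,T_2)$ of tableaux is of type $D_j(a)$ if $T_1$ is obtained from $T_2$ by exchanging the letters $b$ and $c$, and the pair of subwords of the reading words of $T_1$ and $T_2$ formed by the letters $a,b,c,d$ equals $D_j(a)$. Plethystic notation: $X=x_1+\cdots+x_N$, $X^t=X(1-t)$, and $S_\mu[X^t]$ is the Schur function with $p_k$ replaced by $p_k[X](1-t^k)$. $\digamma$ sends a standard tableau $T$ to $q^{\mathrm{cocharge}(T)}S_{\mathrm{shape}(T)}[X^t]$. *)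

From HB Require Import structures.
From mathcomp Require Import all_boot all_order all_algebra.
From mathcomp Require Import mpoly.
Set Implicit Arguments.
Unset Strict Implicit.
Unset Printing Implicit Defensive.
Import Order.TTheory GRing.Theory Num.Theory.

(* Tableaux (French convention), identified with (shape, reading word).   *)
(* shape = [:: l_1; l_2; ...] row lengths from the bottom row upward;      *)
(* reading word = rows listed from the top row to the bottom row, each    *)
(* row read left to right.                                                *)
Definition tableau := (seq nat * seq nat)%type.

Definition shape (T : tableau) : seq nat := T.1.
Definition rword (T : tableau) : seq nat := T.2.

Definition rows (T : tableau) : seq (seq nat) :=
  rev (reshape (rev (shape T)) (rword T)).

(* entry in row r (0 = bottom), column c (0 = leftmost) *)
Definition entry (T : tableau) (r c : nat) : nat := nth 0 (nth [::] (rows T) r) c.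

Definition is_partition (sh : seq nat) : Prop :=
  sorted geq sh /\ all (fun k => 0 < k) sh.

Definition standard (T : tableau) : Prop :=
  [/\ is_partition (shape T),
      size (rword T) = sumn (shape T),
      perm_eq (rword T) (iota 1 (sumn (shape T))),
      (forall r c, r < size (shape T) -> c.+1 < nth 0 (shape T) r ->
         entry T r c < entry T r c.+1) &
      (forall r c, r.+1 < size (shape T) -> c < nth 0 (shape T) r.+1 ->
         entry T r c < entry T r.+1 c)].

Fixpoint cvec (w : seq nat) (i : nat) : nat :=
  match i with
  | 0 => 0
  | 1 => 0
  | (k.+1 as i').+1 => cvec w i' + (index i'.+1 w < index i' w)
  end.

Definition cocharge_word (w : seq nat) : nat :=
  \sum_(1 <= i < (size w).+1) cvec w i.

Definition cocharge (T : tableau) : nat := cocharge_word (rword T).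

Definition Dpair (j a : nat) : seq nat * seq nat :=
  let b := a.+1 in let c := a.+2 in let d := a.+3 in
  match j with
  | 1 => ([:: b; a; c; d], [:: c; a; b; d])
  | 2 => ([:: d; b; a; c], [:: d; c; a; b])
  | 3 => ([:: a; c; d; b], [:: a; b; d; c])
  | 4 => ([:: c; d; b; a], [:: b; d; c; a])
  | _ => ([::], [::])
  end.

Definition swap_letters (x y : nat) (k : nat) : nat :=
  if k == x then y else if k == y then x else k.

Definition pair_of_type (j a : nat) (T1 T2 : tableau) : Prop :=
  [/\ shape T1 = shape T2,
      rword T1 = map (swap_letters a.+1 a.+2) (rword T2),
      [seq k <- rword T1 | k \in [:: a; a.+1; a.+2; a.+3]] = (Dpair j a).1 &
      [seq k <- rword T2 | k \in [:: a; a.+1; a.+2; a.+3]] = (Dpair j a).2].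

Local Open Scope ring_scope.

Definition Kqt := {mpoly int[2]}.
Definition qv : Kqt := 'X_(0 : 'I_2).
Definition tv : Kqt := 'X_(1 : 'I_2).

Definition PX (N : nat) := {mpoly Kqt[N]}.

Definition hcomp (N m : nat) : PX N :=
  \sum_(s : m.-tuple 'I_N | sorted (fun u v : 'I_N => (u <= v)%N) s)
     \prod_(i <- s) 'X_i.

(* h_k[X^t] = h_k[X(1-t)] = sum_j h_{k-j}[X] h_j[-tX]
                          = sum_j (-t)^j e_j(x) h_{k-j}(x),
   i.e. the coefficient of z^k in prod_i (1 - t x_i z)/(1 - x_i z). *)
Definition hplet (N k : nat) : PX N :=
  \sum_(j < k.+1) ((- tv) ^+ j)%:MP * mesym N Kqt j * hcomp N (k - j).

Definition hplet_int (N : nat) (k : int) : PX N :=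
  match k with
  | Posz k => hplet N k
  | Negz _ => 0
  end.

(* S_mu[X^t] via the Jacobi--Trudi determinant det(h_{mu_i - i + j}[X^t]),
   (plethysm by X(1-t) is a ring morphism of symmetric functions). *)
Definition schur_plet (N : nat) (mu : seq nat) : PX N :=
  \det (\matrix_(i < size mu, j < size mu)
          hplet_int N ((nth 0 mu i)%:Z - (i : nat)%:Z + (j : nat)%:Z)).

Definition digamma (N : nat) (T : tableau) : PX N :=
  (qv ^+ cocharge T)%:MP * schur_plet N (shape T).

From mathcomp Require Import all_boot all_order all_algebra.
From mathcomp Require Import mpoly.
From mathcomp Require Import zify.

Set Implicit Arguments.
Unset Strict Implicit.
Unset Printing Implicit Defensive.
Import GRing.Theory.

(* The shapes of T and T' agree, so only the cocharges matter.  Whether m+1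
   stands left of m in the reading word is not affected by exchanging b and c
   unless m is a, b or c, and for these three letters it can be read off the
   pattern D_j(a).  In each of the four patterns a single such inversion moves
   one step: T has it at t-1 where T' has it at t (t = b for D_1, D_2 and t = c
   for D_3, D_4).  Hence the cocharge vectors differ only in the entry c_t,
   which is one larger for T. *)

Definition left_of (T : eqType) (s : seq T) (x y : T) : bool :=
  (index x s < index y s).

Lemma left_of_filter (T : eqType) (P : pred T) (s : seq T) x y :
  P x -> P y -> left_of (filter P s) x y = left_of s x y.
Proof.
rewrite /left_of => Px Py; elim: s => //= z s IH.
case Pz: (P z) => /=.
  by case: eqP => _; case: eqP => _ //=; rewrite ltnS.
have zx : (z == x) = false by apply: contraFF Pz => /eqP ->.
have zy : (z == y) = false by apply: contraFF Pz => /eqP ->.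
by rewrite zx zy ltnS.
Qed.

Lemma left_of_map (T : eqType) (f : T -> T) (s : seq T) x y :
  injective f -> left_of (map f s) (f x) (f y) = left_of s x y.
Proof. by move=> f_inj; rewrite /left_of !index_map. Qed.

Lemma left_of_map_fixed (T : eqType) (f : T -> T) (s : seq T) x y :
  injective f -> f x = x -> f y = y -> left_of (map f s) x y = left_of s x y.
Proof. by move=> f_inj {1}<- {1}<-; apply: left_of_map. Qed.

Lemma left_of_addn a s x y :
  left_of (map (addn a) s) (a + x) (a + y) = left_of s x y.
Proof. exact/left_of_map/addnI. Qed.

Lemma cvecS (w : seq nat) m :
  0 < m -> cvec w m.+1 = cvec w m + left_of w m.+1 m.
Proof. by case: m. Qed.

Lemma cvec_moved_inversion (w w' : seq nat) t : 2 <= t ->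
  (forall m, 0 < m ->
     left_of w m.+1 m + (m == t) = left_of w' m.+1 m + (m.+1 == t)) ->
  forall k, cvec w k = cvec w' k + (k == t).
Proof.
move=> t_ge2 moved; elim=> [|[|k] IH].
- by rewrite (_ : 0 == t = false) //; apply/eqP; lia.
- by rewrite (_ : 1 == t = false) //; apply/eqP; lia.
rewrite (cvecS w) // (cvecS w') // IH -!addnA; congr (_ + _).
by rewrite addnC moved.
Qed.

Lemma cocharge_word_moved_inversion (w w' : seq nat) t :
  size w = size w' -> 2 <= t <= size w' ->
  (forall m, 0 < m ->
     left_of w m.+1 m + (m == t) = left_of w' m.+1 m + (m.+1 == t)) ->
  cocharge_word w = (cocharge_word w').+1.
Proof.
move=> eq_size /andP[t_ge2 t_le] moved; rewrite /cocharge_word eq_size.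
under eq_bigr do rewrite (cvec_moved_inversion t_ge2 moved).
rewrite big_split /= -big_mkcondr /= big_nat1_eq.
by rewrite (_ : 1 <= t < (size w').+1) ?addn1 //; lia.
Qed.

Lemma swap_lettersK x y : involutive (swap_letters x y).
Proof.
move=> k; rewrite /swap_letters; case: (eqVneq k x) => [->|kx].
  by rewrite eqxx; case: eqVneq => // ->.
case: (eqVneq k y) => [->|ky]; first by rewrite eqxx.
by rewrite (negbTE kx) (negbTE ky).
Qed.

Lemma swap_letters_id x y k : k != x -> k != y -> swap_letters x y k = k.
Proof. by rewrite /swap_letters => /negbTE -> /negbTE ->. Qed.

Lemma standard_letter_le T x :
  standard T -> x \in rword T -> x <= size (rword T).
Proof.
by case=> _ -> perm_T _ _; rewrite (perm_mem perm_T) mem_iota; lia.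
Qed.

(* In [D_j(0)], the inversion "m+1 left of m" of the second word at
   [m = Dpair_step j] sits at [m = Dpair_step j - 1] in the first word. *)
Definition Dpair_step (j : nat) : nat := if j <= 2 then 1 else 2.

Lemma Dpair_step_bounds j : 1 <= Dpair_step j <= 2.
Proof. by rewrite /Dpair_step; case: ifP. Qed.

Lemma Dpair_shift j a :
  Dpair j a = (map (addn a) (Dpair j 0).1, map (addn a) (Dpair j 0).2).
Proof. by case: j => [|[|[|[|[|j]]]]] //=; rewrite !addnS addn0. Qed.

Lemma Dpair_inversions j k : 1 <= j <= 4 -> k < 3 ->
  (left_of (Dpair j 0).1 k.+1 k + (k == Dpair_step j) =
   left_of (Dpair j 0).2 k.+1 k + (k.+1 == Dpair_step j)).
Proof. by case: j => [|[|[|[|[|j]]]]] //; case: k => [|[|[|k]]]. Qed.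

Lemma pair_of_type_inversions j a T1 T2 : 1 <= j <= 4 ->
  pair_of_type j a T1 T2 -> forall m,
  (left_of (rword T1) m.+1 m + (m == a + Dpair_step j) =
   left_of (rword T2) m.+1 m + (m.+1 == a + Dpair_step j)).
Proof.
move=> j14 [_ eq_word pat1 pat2] m.
have step12 := Dpair_step_bounds j.
case: (boolP (a <= m < a + 3)) => [/andP[a_le m_lt] | outside].
  have -> : m = a + (m - a) by lia.
  have k_lt : m - a < 3 by lia.
  move: (m - a) k_lt => k k_lt.
  set L := [:: a; a.+1; a.+2; a.+3] in pat1 pat2.
  have inL : forall l, l <= 3 -> a + l \in L.
    by move=> l l_le; rewrite !inE; lia.
  rewrite -addnS -(left_of_filter (P := fun k => k \in L) (rword T1)) ?inL; try lia.
  rewrite -(left_of_filter (P := fun k => k \in L) (rword T2)) ?inL; try lia.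
  rewrite pat1 pat2 Dpair_shift /=.
  by rewrite !left_of_addn !eqn_add2l; apply: Dpair_inversions.
rewrite eq_word left_of_map_fixed; last 3 first.
- exact: can_inj (swap_lettersK _ _).
- by apply: swap_letters_id; apply/eqP; lia.
- by apply: swap_letters_id; apply/eqP; lia.
have -> : (m == a + Dpair_step j) = false by apply/eqP; lia.
have -> : (m.+1 == a + Dpair_step j) = false by apply/eqP; lia.
by [].
Qed.

Lemma pair_of_type_cocharge j a T1 T2 :
  standard T2 -> 1 <= a -> 1 <= j <= 4 -> pair_of_type j a T1 T2 ->
  cocharge T1 = (cocharge T2).+1.
Proof.
move=> std_T2 a_ge1 j14 pairT; have [_ eq_word _ pat2] := pairT.
have d_in_T2 : a.+3 \in rword T2.
  have : a.+3 \in [seq k <- rword T2 | k \in [:: a; a.+1; a.+2; a.+3]].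
    by rewrite pat2; case: j j14 {pairT pat2} => [|[|[|[|[|j]]]]] //= _;
      rewrite !inE eqxx ?orbT.
  by rewrite mem_filter => /andP[].
have d_le := standard_letter_le std_T2 d_in_T2.
have step12 := Dpair_step_bounds j.
apply: (@cocharge_word_moved_inversion _ _ (a + Dpair_step j)).
- by rewrite eq_word size_map.
- lia.
- by move=> m _; apply: pair_of_type_inversions.
Qed.

Local Open Scope ring_scope.

Theorem lemma23 (N : nat) (T T' : tableau) (i j : nat) :
  standard T -> standard T' ->
  (1 <= i)%N -> (1 <= j <= 4)%N ->
  pair_of_type j i T T' ->
  digamma N T = qv%:MP * digamma N T'.
Proof.
move=> _ std_T' i_ge1 j14 pairT; have [eq_shape _ _ _] := pairT.
rewrite /digamma (pair_of_type_cocharge std_T' i_ge1 j14 pairT) eq_shape.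
by rewrite exprS mpolyCM mulrA.
Qed.
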